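(* Let $\lambda\in\mathbb{R}$ and let $H_0:\mathbb{R}^n\times[0,T]\times\mathbb{R}^n\to\mathbb{R}$ satisfy: (a) $|H_0(x,t,p)-H_0(y,t,p)|\le C_1(\beta+|p|)|x-y|$ with $C_1\ge0$, $\beta\in\{0,1\}$; (b) $|H_0(x,t,p)-H_0(x,t,q)|\le(A_2|x|+B_2)|p-q|$ with $A_2,B_2\ge0$; (c) $p\mapsto H_0(x,t,p)$ convex; (d) $H_0\in C^2$; (e) $D_{pp}H_0$ positive definite everywhere. Let $u\in C(\mathbb{R}^n\times[0,T))$ be a viscosity solution of $$u_t+\lambda u+H_0(x,t,D_xu)=0\ \text{in }\mathbb{R}^n\times(0,T),\qquad u(x,0)=u_0(x).$$ Let $u$ be differentiable at $(x,t)\in\mathbb{R}^n\times(0,T)$ and let $(\xi,\eta)\in C^1([0,t];\mathbb{R}^n)^2$ solve $\xi'(s)=D_pH_0(\xi(s),s,\eta(s))$, $\eta'(s)=-D_xH_0(\xi(s),s,\eta(s))-\lambda\eta(s)$ on $[0,t]$ with $\xi(t)=x$, $\eta(t)=D_xu(x,t)$. Then $$|D_xu(x,t)-e^{-\lambda t}\eta(0)|\le\frac{C_1\beta}{C_1+\lambda}(e^{C_1t}-e^{-\lambda t})+|D_xu(x,t)|(e^{C_1t}-1)\ \ (\lambda\ne-C_1),$$ $$|D_xu(x,t)-e^{C_1t}\eta(0)|\le C_1\beta te^{C_1t}+|D_xu(x,t)|(e^{C_1t}-1)\ \ (\lambda=-C_1),$$ $$|D_xu(x,t)-e^{-\lambda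 t}\eta(0)|\le\frac{C_1\beta}{C_1-\lambda}(e^{(C_1-\lambda)t}-1)+|\eta(0)|(e^{(C_1-\lambda)t}-e^{-\lambda t})\ \ (\lambda\ne C_1),$$ $$|D_xu(x,t)-e^{-C_1t}\eta(0)|\le C_1\beta t+|\eta(0)|(1-e^{-C_1t})\ \ (\lambda=C_1).$$ Consequently $|D_xu(x,t)|\ge|\eta(0)|e^{-(C_1+\lambda)t}-\frac{C_1\beta}{C_1+\lambda}(1-e^{-(C_1+\lambda)t})$ if $\lambda\ne-C_1$; $|D_xu(x,t)|\ge|\eta(0)|-C_1\beta t$ if $\lambda=-C_1$; $|D_xu(x,t)|\le|\eta(0)|e^{(C_1-\lambda)t}+\frac{C_1\beta}{C_1-\lambda}(e^{(C_1-\lambda)t}-1)$ if $\lambda\ne C_1$; $|D_xu(x,t)|\le|\eta(0)|+C_1\beta t$ if $\lambda=C_1$.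
   Context: $T>0$, $u_0:\mathbb{R}^n\to\mathbb{R}$ Lipschitz. Viscosity solution of $u_t+F(x,t,u,D_xu)=0$, $u(\cdot,0)=u_0$: $u\in C(\mathbb{R}^n\times[0,T))$ with $u(\cdot,0)=u_0$ such that for every $\phi\in C^1(\mathbb{R}^n\times(0,T))$, if $u-\phi$ has a local max (resp. min) at $(x,t)\in\mathbb{R}^n\times(0,T)$ then $\phi_t+F(x,t,u(x,t),D_x\phi(x,t))\le0$ (resp. $\ge0$). Here $F(x,t,u,p)=\lambda u+H_0(x,t,p)$. *)

From HB Require Import structures.
From mathcomp Require Import all_boot all_order all_algebra.
From mathcomp Require Import all_classical all_reals all_analysis.
Set Implicit Arguments. Unset Strict Implicit. Unset Printing Implicit Defensive.
Import Order.TTheory GRing.Theory Num.Theory.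
Import numFieldNormedType.Exports.
Local Open Scope classical_set_scope.
Local Open Scope ring_scope.

Definition enorm {R : realType} {n : nat} (v : 'rV[R]_n) : R :=
  Num.sqrt (\sum_(i < n) v 0 i ^+ 2).

Definition uncurry_xt {R : realType} {n : nat} (u : 'rV[R]_n -> R -> R)
  : 'rV[R]_n * R -> R := fun z => u z.1 z.2.

Definition gradx {R : realType} {n : nat} (f : 'rV[R]_n * R -> R)
  (z : 'rV[R]_n * R) : 'rV[R]_n :=
  \row_(i < n) derive f z ((delta_mx 0 i : 'rV[R]_n), (0 : R)).
Definition partt {R : realType} {n : nat} (f : 'rV[R]_n * R -> R)
  (z : 'rV[R]_n * R) : R :=
  derive f z ((0 : 'rV[R]_n), (1 : R)).

Definition C1_on {R : realType} {V : normedModType R} (f : V -> R) (D : set V)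
  : Prop :=
  (forall z, D z -> differentiable f z) /\
  (forall (v : V) z, D z -> {for z, continuous (fun w => derive f w v)}).

Definition C2_on {R : realType} {V : normedModType R} (f : V -> R) (D : set V)
  : Prop :=
  C1_on f D /\ forall v : V, C1_on (fun w => derive f w v) D.

Definition Hunc {R : realType} {n : nat} (H0 : 'rV[R]_n -> R -> 'rV[R]_n -> R)
  : 'rV[R]_n * R * 'rV[R]_n -> R := fun z => H0 z.1.1 z.1.2 z.2.

Definition evec {R : realType} {n : nat} (i : 'I_n) : 'rV[R]_n := delta_mx 0 i.

Definition DpH {R : realType} {n : nat} (H0 : 'rV[R]_n -> R -> 'rV[R]_n -> R)
  (x : 'rV[R]_n) (s : R) (p : 'rV[R]_n) : 'rV[R]_n :=
  \row_(i < n) derive (Hunc H0) (x, s, p) ((0 : 'rV[R]_n), (0 : R), evec i).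
Definition DxH {R : realType} {n : nat} (H0 : 'rV[R]_n -> R -> 'rV[R]_n -> R)
  (x : 'rV[R]_n) (s : R) (p : 'rV[R]_n) : 'rV[R]_n :=
  \row_(i < n) derive (Hunc H0) (x, s, p) (evec i, (0 : R), (0 : 'rV[R]_n)).
Definition DppH {R : realType} {n : nat} (H0 : 'rV[R]_n -> R -> 'rV[R]_n -> R)
  (x : 'rV[R]_n) (s : R) (p : 'rV[R]_n) : 'M[R]_n :=
  \matrix_(i < n, j < n)
    derive (fun w => derive (Hunc H0) w ((0 : 'rV[R]_n), (0 : R), evec i))
      (x, s, p) ((0 : 'rV[R]_n), (0 : R), evec j).

Definition posdef {R : realType} {n : nat} (M : 'M[R]_n) : Prop :=
  forall v : 'rV[R]_n, v != 0 -> 0 < (v *m M *m v^T) 0 0.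

(* f' is the derivative of f on the closed interval [a,b]
   (one-sided at the endpoints). *)
Definition deriv_on {R : realType} {n : nat} (a b : R) (f f' : R -> 'rV[R]_n)
  : Prop :=
  forall s, a <= s <= b ->
    (fun h : R => h^-1 *: (f (s + h) - f s))
      @ (within [set h : R | a <= s + h <= b] (0 : R)^') --> f' s.

Definition visc_solution {R : realType} {n : nat} (T lam : R)
  (H0 : 'rV[R]_n -> R -> 'rV[R]_n -> R) (u0 : 'rV[R]_n -> R)
  (u : 'rV[R]_n -> R -> R) : Prop :=
  {within [set z : 'rV[R]_n * R | 0 <= z.2 < T], continuous (uncurry_xt u)} /\
  (forall x, u x 0 = u0 x) /\
  (forall phi : 'rV[R]_n * R -> R,
     C1_on phi [set z : 'rV[R]_n * R | 0 < z.2 < T] ->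
     forall (x : 'rV[R]_n) (t : R), 0 < t < T ->
     ((\forall z \near (x, t),
         uncurry_xt u z - phi z <= uncurry_xt u (x, t) - phi (x, t)) ->
       partt phi (x, t) + lam * u x t + H0 x t (gradx phi (x, t)) <= 0) /\
     ((\forall z \near (x, t),
         uncurry_xt u (x, t) - phi (x, t) <= uncurry_xt u z - phi z) ->
       0 <= partt phi (x, t) + lam * u x t + H0 x t (gradx phi (x, t)))).

From mathcomp Require Import all_boot all_order all_algebra.
From mathcomp Require Import all_classical all_reals all_analysis.
From mathcomp Require Import ring lra.
Import Order.TTheory GRing.Theory Num.Theory.
Import numFieldNormedType.Exports.
Local Open Scope classical_set_scope.
Local Open Scope ring_scope.

(* Along the characteristic, hypothesis (a) bounds the spatial gradient of [H0],
   so [|eta' + lam eta| <= C1 (beta + |eta|)].  Hence [W s := e^(lam s) eta s - c]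
   satisfies [|W'| <= C1 (beta e^(lam s) + |c| + |W|)], and a Gronwall argument
   (run on a smoothing of [|W|], which need not be differentiable where [W]
   vanishes) makes [e^(+-C1 s) (|W s| + |c|) +- C1 beta int_0^s e^((+-C1 + lam) r) dr]
   monotone.  The anchors [c = e^(lam t) eta t] (backward) and [c = eta 0]
   (forward) give the four bounds on [|eta t - e^(-lam t) eta 0|], and the
   triangle inequality turns them into bounds on [|eta t|]; finally
   [eta t = D_x u (x, t)].  Only (a), the differentiability of [H0] and the
   terminal condition on [eta] are used. *)

Section EuclideanNorm.
Context {R : realType} {n : nat}.
Implicit Types v w : 'rV[R]_n.

Definition dotv v w : R := \sum_(i < n) v 0 i * w 0 i.

Lemma enorm_ge0 v : 0 <= enorm v.
Proof. exact: sqrtr_ge0. Qed.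

Lemma enorm_sq v : enorm v ^+ 2 = \sum_(i < n) v 0 i ^+ 2.
Proof. by rewrite sqr_sqrtr // sumr_ge0 // => i _; rewrite sqr_ge0. Qed.

Lemma dotvv v : dotv v v = enorm v ^+ 2.
Proof. by rewrite enorm_sq; apply: eq_bigr => i _; rewrite expr2. Qed.

Lemma enorm_eq0 v : enorm v = 0 -> v = 0.
Proof.
move=> v0; apply/rowP => i; rewrite mxE; apply/eqP; rewrite -sqrf_eq0.
have /psumr_eq0P -> // : \sum_(j < n) v 0 j ^+ 2 = 0 by rewrite -enorm_sq v0 expr0n.
by move=> j _; rewrite sqr_ge0.
Qed.

Lemma dotv0 v : dotv v 0 = 0.
Proof. by rewrite /dotv big1 // => i _; rewrite mxE mulr0. Qed.

Lemma dotvC v w : dotv v w = dotv w v.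
Proof. by apply: eq_bigr => i _; rewrite mulrC. Qed.

Lemma dotNv v w : dotv (- v) w = - dotv v w.
Proof. by rewrite /dotv -sumrN; apply: eq_bigr => i _; rewrite mxE mulNr. Qed.

Lemma cauchy_schwarz v w : dotv v w <= enorm v * enorm w.
Proof.
have expand a b : \sum_(i < n) (a * v 0 i - b * w 0 i) ^+ 2
    = a ^+ 2 * enorm v ^+ 2 - 2 * a * b * dotv v w + b ^+ 2 * enorm w ^+ 2.
  rewrite !enorm_sq /dotv !mulr_sumr -sumrB -big_split /=.
  by apply: eq_bigr => i _; ring.
set A := enorm v; set B := enorm w.
have [AB0|AB0] := eqVneq (A * B) 0.
  rewrite AB0; move/eqP: AB0; rewrite mulf_eq0 => /orP[]/eqP/enorm_eq0->.
    by rewrite dotvC dotv0.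
  by rewrite dotv0.
have ABgt0 : 0 < A * B by rewrite lt_def AB0 mulr_ge0 // enorm_ge0.
have : 0 <= \sum_(i < n) (B * v 0 i - A * w 0 i) ^+ 2.
  by apply: sumr_ge0 => i _; rewrite sqr_ge0.
have -> : \sum_(i < n) (B * v 0 i - A * w 0 i) ^+ 2
          = 2 * (A * B) * (A * B - dotv v w) by rewrite expand -/A -/B; ring.
by rewrite pmulr_rge0 ?subr_ge0 // mulr_gt0.
Qed.

Lemma enormZ (k : R) v : enorm (k *: v) = `|k| * enorm v.
Proof.
rewrite -sqrtr_sqr -sqrtrM ?sqr_ge0 // mulr_sumr; congr Num.sqrt.
by apply: eq_bigr => i _; rewrite mxE exprMn.
Qed.

Lemma enormN v : enorm (- v) = enorm v.
Proof. by rewrite -scaleN1r enormZ normrN normr1 mul1r. Qed.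

Lemma norm_dotv_le v w : `|dotv v w| <= enorm v * enorm w.
Proof.
have := cauchy_schwarz (- v) w; rewrite dotNv enormN => le_Nvw.
by rewrite ler_norml cauchy_schwarz andbT lerNl.
Qed.

Lemma enorm0 : enorm (0 : 'rV[R]_n) = 0.
Proof. by rewrite -(scale0r 0) enormZ normr0 mul0r. Qed.

Lemma enorm_distC v w : enorm (v - w) = enorm (w - v).
Proof. by rewrite -opprB enormN. Qed.

Lemma ler_enormD v w : enorm (v + w) <= enorm v + enorm w.
Proof.
rewrite -[X in _ <= X]ger0_norm ?addr_ge0 ?enorm_ge0 // -sqrtr_sqr.
apply: ler_wsqrtr.
have -> : \sum_(i < n) (v + w) 0 i ^+ 2 = enorm v ^+ 2 + 2 * dotv v w + enorm w ^+ 2.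
  rewrite !enorm_sq /dotv mulr_sumr -!big_split /=.
  by apply: eq_bigr => i _; rewrite mxE; ring.
by have := cauchy_schwarz v w; nra.
Qed.

Lemma ler_enorm_dist v w : enorm v <= enorm w + enorm (v - w).
Proof. by rewrite -{1}(subrKC w v) ler_enormD. Qed.

Lemma enorm_subZV (L : R) v w : 0 < L -> enorm (v - L^-1 *: w) = L^-1 * enorm (L *: v - w).
Proof.
move=> L_gt0; rewrite -[in RHS](gtr0_norm (_ : 0 < L^-1)) ?invr_gt0 // -enormZ.
by rewrite scalerBr scalerA mulVf ?gt_eqF // scale1r.
Qed.

End EuclideanNorm.

Section PartialGradient.
Context {R : realType} {n : nat}.
Implicit Types (f : 'rV[R]_n * R * 'rV[R]_n -> R) (v : 'rV[R]_n).

Lemma derive_x_dotv f z v : differentiable f z ->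
  derive f z (v, 0, 0) = dotv v (\row_(i < n) derive f z (evec i, 0, 0)).
Proof.
move=> df; pose L v := 'd f z (v, (0 : R), (0 : 'rV[R]_n)).
have LE w : derive f z (w, 0, 0) = L w by rewrite deriveE.
have L0 : L 0 = 0 by rewrite /L -[(0, 0, 0)]/(0 : 'rV[R]_n * R * 'rV[R]_n) linear0.
have LD w1 w2 : L (w1 + w2) = L w1 + L w2.
  rewrite /L -linearD; congr ('d f z _).
  by transitivity (w1 + w2, (0 : R) + 0, (0 : 'rV[R]_n) + 0); [rewrite !addr0|].
have LZ (k : R) w : L (k *: w) = k * L w.
  rewrite /L -[k * _]/(k *: _) -linearZ; congr ('d f z _).
  by transitivity (k *: w, k *: (0 : R), k *: (0 : 'rV[R]_n)); [rewrite !scaler0|].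
rewrite LE {1}(row_sum_delta v) (big_morph L LD L0) /dotv.
by apply: eq_bigr => i _; rewrite LZ mxE LE.
Qed.

Lemma norm_derive_x_le f x s p v (K : R) : differentiable f (x, s, p) ->
  (forall y, `|f (y, s, p) - f (x, s, p)| <= K * enorm (y - x)) ->
  `|derive f (x, s, p) (v, 0, 0)| <= K * enorm v.
Proof.
move=> df f_lip; have dv := @diff_derivable _ _ _ f (x, s, p) (v, 0, 0) df.
rewrite /derive -lim_norm //; apply: limr_le; first exact: is_cvg_norm.
near=> h; have h0 : h != 0 by near: h; exact: nbhs_dnbhs_neq.
rewrite /comp /shift /=.
have -> : h *: (v, (0 : R), (0 : 'rV[R]_n)) + (x, s, p) = (x + h *: v, s, p).
  transitivity ((h *: v + x, h *: (0 : R) + s), h *: (0 : 'rV[R]_n) + p) => //.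
  by rewrite !scaler0 !add0r addrC.
rewrite normrZ normfV ler_pdivrMl ?normr_gt0 // mulrCA -enormZ.
by apply: le_trans (f_lip _) _; rewrite [x + _]addrC addrK.
Unshelve. all: by end_near.
Qed.

Lemma enorm_DxH_le (H0 : 'rV[R]_n -> R -> 'rV[R]_n -> R) x s p (K : R) :
  0 <= K -> differentiable (Hunc H0) (x, s, p) ->
  (forall y, `|H0 y s p - H0 x s p| <= K * enorm (y - x)) ->
  enorm (DxH H0 x s p) <= K.
Proof.
move=> K0 dH H_lip; set g := DxH H0 x s p.
have : enorm g ^+ 2 <= K * enorm g.
  rewrite -dotvv -derive_x_dotv //; apply: le_trans (ler_norm _) _.
  exact: norm_derive_x_le.
have := enorm_ge0 g; nra.
Qed.

End PartialGradient.

Section DeriveOnInterval.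
Context {R : realType} {V : normedModType R}.
Implicit Types (a b s : R) (f df : R -> V).

Definition has_derive_on a b f df : Prop :=
  forall s, a <= s <= b ->
    (fun h : R => h^-1 *: (f (s + h) - f s))
      @ (within [set h : R | a <= s + h <= b] (0 : R)^') --> df s.

Lemma has_derive_on_is_derive a b f df s :
  has_derive_on a b f df -> a < s < b -> is_derive s 1 f (df s).
Proof.
move=> D sab; have /andP[a_s s_b] := sab.
have near_itv : \forall h \near (0 : R)^', a <= s + h <= b.
  apply: nbhs_dnbhs; apply/(nbhs0P (fun z => a <= z <= b)).
  apply: filterS (near_in_itvoo _); last by rewrite in_itv /=; exact: sab.
  by move=> z; rewrite in_itv /= => /andP[az zb]; rewrite !ltW.
have quot_cvg : (fun h : R => h^-1 *: (f (s + h) - f s)) @ (0 : R)^' --> df s.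
  move=> P /(D s); rewrite !ltW // => /(_ isT).
  by rewrite /= /within; apply: filterS2 near_itv => h itv_h; exact.
have quotE : (fun h : R => h^-1 *: ((f \o shift s) (h *: 1) - f s))
    = (fun h : R => h^-1 *: (f (s + h) - f s)).
  by apply/funext => h /=; rewrite -[h *: 1]/(h * 1) mulr1 [h + s]addrC.
apply: DeriveDef; first by apply/cvg_ex; exists (df s); rewrite /= quotE.
by rewrite /derive quotE; exact: cvg_lim.
Unshelve. all: by end_near.
Qed.

Lemma has_derive_on_continuous a b f df :
  has_derive_on a b f df -> {within `[a, b], continuous f}.
Proof.
move=> D; apply/subspace_continuousP => s; rewrite /= in_itv /= => sab.
have /cvgrPdist_le/(_ 1 ltr01) := D s sab.
rewrite near_withinE /dnbhs near_withinE => /nbhs_ballP[d d_gt0 quot_le].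
apply/cvgrPdist_lt => e e0; rewrite near_withinE.
have M_gt0 : 0 < `|df s| + 1 by rewrite ltr_wpDl.
apply/nbhs_ballP; exists (Num.min d (e / (`|df s| + 1))).
  by rewrite /= lt_min d_gt0 divr_gt0.
move=> y; rewrite /ball /= lt_min in_itv /= => /andP[y_d y_e] y_ab.
have [<-|sy] := eqVneq s y; first by rewrite subrr normr0.
have ys0 : y - s != 0 by rewrite subr_eq0 eq_sym.
have := quot_le (y - s); rewrite /ball /= sub0r normrN distrC subrKC.
move=> /(_ y_d ys0 y_ab); set q := _ *: _ => q_le.
have -> : f s - f y = - ((y - s) *: q) by rewrite scalerA mulfV // scale1r opprB.
have q_M : `|q| <= `|df s| + 1.
  rewrite -[q in `|q|](subKr (df s)); apply: le_trans (ler_normB _ _) _.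
  by rewrite lerD2l.
rewrite normrN normrZ; apply: le_lt_trans (ler_wpM2l (normr_ge0 _) q_M) _.
by rewrite -ltr_pdivlMr // distrC.
Qed.

End DeriveOnInterval.

Lemma deriv_on_coord {R : realType} {n : nat} {a b : R} {f df : R -> 'rV[R]_n} (i : 'I_n) :
  deriv_on a b f df -> has_derive_on a b (fun s => f s 0 i) (fun s => df s 0 i).
Proof.
move=> D s sab; have := cvg_comp _ _ (D s sab) (@coord_continuous R 1 n 0 i (df s)).
set g := (_ \o _); suff -> : g = (fun h => h^-1 * (f (s + h) 0 i - f s 0 i)) by [].
by apply/funext => h; rewrite /g /= !mxE.
Qed.

Section ScalarComparison.
Context {R : realType}.
Implicit Types (a s t : R).

Lemma is_derive_expRM a s : is_derive s 1 (fun y => expR (a * y)) (a * expR (a * s)).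
Proof.
apply: is_derive_eq (is_derive1_comp (is_derive_expR _) (is_deriveZ a (is_derive_id s 1))) _.
by rewrite -[a *: 1]/(a * 1) mulr1 mulrC.
Qed.

Lemma derive_ge0_le (G dG : R -> R) t : 0 < t ->
  {within `[0, t], continuous G} ->
  (forall s, 0 < s < t -> is_derive s 1 G (dG s)) ->
  (forall s, 0 < s < t -> 0 <= dG s) -> G 0 <= G t.
Proof.
move=> t0 cG dG_G dG_ge0.
have dG_in s : s \in `]0, t[ -> is_derive s 1 G (dG s).
  by rewrite in_itv; exact: dG_G.
have [c /[!in_itv] /= ct] := MVT t0 dG_in cG.
by rewrite -subr_ge0 subr0 => ->; rewrite mulr_ge0 ?dG_ge0 // ltW.
Qed.

Lemma continuous_expRM a : continuous (fun s => expR (a * s)).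
Proof.
by move=> s; have [+ _] := is_derive_expRM a s; move/derivable1_diffP/differentiable_continuous.
Qed.

(* [sigma = 1] is the backward and [sigma = -1] the forward Gronwall inequality. *)
Lemma exp_weighted_comparison (Phi dPhi P : R -> R) (t C1 b k lam sigma : R) :
  0 < t -> `|sigma| = 1 ->
  {within `[0, t], continuous Phi} -> {within `[0, t], continuous P} ->
  (forall s, 0 < s < t -> is_derive s 1 Phi (dPhi s)) ->
  (forall s, 0 < s < t -> is_derive s 1 P (expR ((sigma * C1 + lam) * s))) ->
  (forall s, 0 < s < t -> `|dPhi s| <= C1 * (b * expR (lam * s) + k + Phi s)) ->
  sigma * (Phi 0 + k + sigma * C1 * b * P 0)
    <= sigma * (expR (sigma * C1 * t) * (Phi t + k) + sigma * C1 * b * P t).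
Proof.
move=> t0 sig1 cPhi cP dPhi_Phi dP_P dPhi_le.
set E := fun s => expR (sigma * C1 * s).
pose G s := sigma * (E s * (Phi s + k) + sigma * C1 * b * P s).
pose dG s := sigma * (E s * (dPhi s + 0) + (Phi s + k) * (sigma * C1 * E s)
                      + sigma * C1 * b * expR ((sigma * C1 + lam) * s)).
have := @derive_ge0_le G dG t t0; rewrite /G /E mulr0 expR0 mul1r; apply.
- have cE : {within `[0, t], continuous E} := continuous_subspaceT (continuous_expRM _).
  move=> s; apply: cvgM; first exact: cvg_cst.
  apply: cvgD; first by apply: cvgM; [exact: cE | apply: cvgD; [exact: cPhi | exact: cvg_cst]].
  by apply: cvgM; [exact: cvg_cst | exact: cP].
- move=> s st; apply: is_deriveZ; apply: is_deriveD (is_deriveZ _ (dP_P s st)).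
  exact: is_deriveM (is_derive_expRM _ _) (is_deriveD (dPhi_Phi s st) (is_derive_cst k s 1)).
- move=> s st; have sig2 : sigma ^+ 2 = 1 by rewrite -real_normK ?num_real // sig1 expr1n.
  have : `|sigma * dPhi s| <= C1 * (b * expR (lam * s) + k + Phi s).
    by rewrite normrM sig1 mul1r dPhi_le.
  rewrite ler_norml => /andP[dPhi_lo _].
  have -> : dG s = E s * (sigma * dPhi s
      + sigma ^+ 2 * (C1 * (b * expR (lam * s) + k + Phi s))).
    by rewrite /dG /E [(sigma * C1 + lam) * s]mulrDl expRD; ring.
  by rewrite sig2 mul1r mulr_ge0 ?expR_ge0 // -lerBlDr sub0r.
Qed.

End ScalarComparison.

Definition exp_primitive {R : realType} (a s : R) : R :=
  if a == 0 then s else expR (a * s) / a.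

Lemma is_derive_exp_primitive {R : realType} (a s : R) :
  is_derive s 1 (exp_primitive a) (expR (a * s)).
Proof.
rewrite /exp_primitive; case: eqP => [->|a0].
  by rewrite mul0r expR0; exact: is_derive_id.
apply: is_derive_eq (is_deriveM (is_derive_expRM a s) (is_derive_cst a^-1 s 1)) _.
by rewrite -![_ *: _]/(_ * _) mulr0 add0r mulrA mulVf ?mul1r //; exact/eqP.
Qed.

Lemma continuous_exp_primitive {R : realType} (a : R) : continuous (exp_primitive a).
Proof.
move=> s; have [+ _] := is_derive_exp_primitive a s.
by move/derivable1_diffP/differentiable_continuous.
Qed.

(* A smoothing of [s |-> enorm (e^(lam s) eta s - c)], differentiable even
   where that distance vanishes; [dl -> 0] recovers the distance. *)
Definition smoothed_dist {R : realType} {n : nat} (lam dl : R)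
    (eta : R -> 'rV[R]_n) (c : 'rV[R]_n) (s : R) : R :=
  Num.sqrt (enorm (expR (lam * s) *: eta s - c) ^+ 2 + dl).

Section SmoothedDistance.
Context {R : realType} {n : nat}.
Context {t lam dl : R} {eta deta : R -> 'rV[R]_n} {c : 'rV[R]_n}.
Hypotheses (deta_eta : deriv_on 0 t eta deta) (dl_gt0 : 0 < dl).

Local Notation Phi := (smoothed_dist lam dl eta c).
Local Notation coord i := (fun s => expR (lam * s) * eta s 0 i - c 0 i).

Lemma smoothed_distE :
  Phi = fun s => Num.sqrt (\sum_(i < n) coord i s ^+ 2 + dl).
Proof.
by apply/funext => s; rewrite /smoothed_dist enorm_sq; under eq_bigr do rewrite !mxE.
Qed.

Lemma smoothed_dist_gt0 s : 0 < Phi s.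
Proof. by rewrite sqrtr_gt0 ltr_wpDl ?sqr_ge0. Qed.

Lemma smoothed_dist_bounds s :
  enorm (expR (lam * s) *: eta s - c) <= Phi s
  <= enorm (expR (lam * s) *: eta s - c) + Num.sqrt dl.
Proof.
rewrite /smoothed_dist; set N := enorm _; have N0 : 0 <= N := enorm_ge0 _.
have sdl0 : 0 <= Num.sqrt dl := sqrtr_ge0 _.
have N2dl0 : 0 <= N ^+ 2 + dl by rewrite addr_ge0 ?sqr_ge0 // ltW.
apply/andP; split.
  by rewrite -{1}(ger0_norm N0) -sqrtr_sqr ler_sqrt // lerDl; exact: ltW.
rewrite -[X in _ <= X]ger0_norm ?addr_ge0 // -sqrtr_sqr ler_sqrt ?sqr_ge0 //.
rewrite sqrrD [Num.sqrt dl ^+ 2]sqr_sqrtr; last exact: ltW.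
by rewrite lerD2r lerDl mulrn_wge0 ?mulr_ge0.
Qed.

Lemma continuous_smoothed_dist : {within `[0, t], continuous Phi}.
Proof.
have coord_cont i : {within `[0, t], continuous (coord i)}.
  move=> s; apply: cvgB (cvg_cst _); apply: cvgM.
    exact: continuous_subspaceT (continuous_expRM lam) s.
  exact: has_derive_on_continuous (deriv_on_coord i deta_eta) s.
rewrite smoothed_distE => s.
apply: (cvg_comp (fun s => \sum_(i < n) coord i s ^+ 2 + dl) Num.sqrt);
  last exact: sqrt_continuous.
apply: cvgD (cvg_cst _); apply: (@cvg_big _ _ +%R 0 xpredT add_continuous) => // i _.
exact: cvg_comp _ _ (coord_cont i s) (@exprn_continuous R 2 _).
Qed.

Lemma is_derive_smoothed_dist s : 0 < s < t ->
  is_derive s 1 Phi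
    (expR (lam * s) * dotv (expR (lam * s) *: eta s - c) (deta s + lam *: eta s) / Phi s).
Proof.
move=> st; set e := expR (lam * s).
pose dcoord i := e *: deta s 0 i + eta s 0 i *: (lam * e) - 0.
have d_coord i : is_derive s 1 (coord i) (dcoord i).
  apply: is_deriveB; apply: is_deriveM; first exact: is_derive_expRM.
  exact: has_derive_on_is_derive (deriv_on_coord i deta_eta) st.
pose dsum := \sum_(i < n) (2%:R * coord i s ^+ 2.-1) *: dcoord i.
pose inner y := \sum_(i < n) coord i y ^+ 2 + dl.
have d_inner : is_derive s 1 inner (dsum + 0).
  apply: is_deriveD.
  have -> : (fun y => \sum_(i < n) coord i y ^+ 2) = \sum_(i < n) (fun y => coord i y ^+ 2).
    by apply/funext => y; rewrite fct_sumE.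
  by apply: is_derive_sum => i; exact: (is_deriveX 2 (d_coord i)).
have inner_gt0 : 0 < inner s by rewrite ltr_wpDl // sumr_ge0 // => i _; rewrite sqr_ge0.
have D := is_derive1_comp (g := inner) (is_derive1_sqrt inner_gt0) d_inner.
rewrite smoothed_distE; apply: is_derive_eq D _.
have -> : dsum = 2 * (e * dotv (e *: eta s - c) (deta s + lam *: eta s)).
  rewrite /dsum /dcoord /dotv !mulr_sumr; apply: eq_bigr => i _; rewrite !mxE -/e.
  rewrite -![_ *: _]/(_ * _); ring.
rewrite -/(inner s) addr0; field.
by rewrite sqrtr_eq0 -ltNge.
Qed.

Lemma norm_deriv_smoothed_dist_le (C1 b : R) s : 0 <= C1 ->
  enorm (deta s + lam *: eta s) <= C1 * (b + enorm (eta s)) ->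
  `|expR (lam * s) * dotv (expR (lam * s) *: eta s - c) (deta s + lam *: eta s) / Phi s|
    <= C1 * (b * expR (lam * s) + enorm c + Phi s).
Proof.
move=> C1_ge0 d_le; set e := expR _; set W := e *: eta s - c.
set d := deta s + _ in d_le *.
have Phi_gt0 := smoothed_dist_gt0 s; have e_gt0 : 0 < e := expR_gt0 _.
have /andP[W_le _] := smoothed_dist_bounds s; rewrite -/e -/W in W_le.
have e_eta : e * enorm (eta s) <= Phi s + enorm c.
  rewrite -[e]gtr0_norm // -enormZ -(subrK c (e *: eta s)).
  by apply: le_trans (ler_enormD _ _) _; rewrite lerD2r.
have dot_le : `|dotv W d| <= Phi s * enorm d.
  exact: le_trans (norm_dotv_le W d) (ler_wpM2r (enorm_ge0 d) W_le).
rewrite normrM normfV (gtr0_norm Phi_gt0) normrM (gtr0_norm e_gt0) ler_pdivrMr //.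
have e_d : e * enorm d <= C1 * (b * e + e * enorm (eta s)).
  rewrite [X in _ <= X](_ : _ = e * (C1 * (b + enorm (eta s)))); last by ring.
  by rewrite ler_wpM2l // ltW.
have e_eta' : C1 * (b * e + e * enorm (eta s)) <= C1 * (b * e + enorm c + Phi s).
  by apply: ler_wpM2l => //; lra.
have := ler_wpM2l (ltW e_gt0) dot_le; have := ler_wpM2l (ltW Phi_gt0) (le_trans e_d e_eta').
lra.
Qed.

End SmoothedDistance.

Section Estimates.
Context {R : realType} {n : nat}.
Variables (C1 b lam t : R).
Implicit Types v w : 'rV[R]_n.

(* Distance between [v = eta t] and the exponentially transported [w = eta 0]. *)
Definition transport_estimates v w : Prop :=
  [/\ (lam != - C1 ->
        enorm (v - expR (- lam * t) *: w)
        <= C1 * b / (C1 + lam) * (expR (C1 * t) - expR (- lam * t))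
           + enorm v * (expR (C1 * t) - 1)),
      (lam = - C1 ->
        enorm (v - expR (C1 * t) *: w)
        <= C1 * b * t * expR (C1 * t) + enorm v * (expR (C1 * t) - 1)),
      (lam != C1 ->
        enorm (v - expR (- lam * t) *: w)
        <= C1 * b / (C1 - lam) * (expR ((C1 - lam) * t) - 1)
           + enorm w * (expR ((C1 - lam) * t) - expR (- lam * t))) &
      (lam = C1 ->
        enorm (v - expR (- C1 * t) *: w)
        <= C1 * b * t + enorm w * (1 - expR (- C1 * t)))].

Definition norm_estimates v w : Prop :=
  [/\ (lam != - C1 ->
        enorm w * expR (- (C1 + lam) * t)
          - C1 * b / (C1 + lam) * (1 - expR (- (C1 + lam) * t)) <= enorm v),
      (lam = - C1 -> enorm w - C1 * b * t <= enorm v),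
      (lam != C1 ->
        enorm v <= enorm w * expR ((C1 - lam) * t)
          + C1 * b / (C1 - lam) * (expR ((C1 - lam) * t) - 1)) &
      (lam = C1 -> enorm v <= enorm w + C1 * b * t)].

Lemma norm_estimates_of_transport v w :
  transport_estimates v w -> norm_estimates v w.
Proof.
have expZ k : enorm (expR k *: w) = expR k * enorm w by rewrite enormZ gtr0_norm ?expR_gt0.
have scaled_le k : expR k * enorm w <= enorm v + enorm (v - expR k *: w).
  by rewrite -expZ enorm_distC; exact: ler_enorm_dist.
have le_scaled k : enorm v <= expR k * enorm w + enorm (v - expR k *: w).
  by rewrite -expZ; exact: ler_enorm_dist.
have El_gt0 : 0 < expR (C1 * t) := expR_gt0 _.
case=> [G1 G2 G3 G4]; split => hl.
- have := G1 hl; have := scaled_le (- lam * t); move=> h1 h2.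
  rewrite -(ler_pM2l El_gt0) [X in X <= _](_ : _ = enorm w * expR (- lam * t)
    - C1 * b / (C1 + lam) * (expR (C1 * t) - expR (- lam * t))); first lra.
  have -> : expR (- (C1 + lam) * t) = expR (- lam * t) / expR (C1 * t).
    by rewrite !mulNr !expRN mulrDl expRD invfM mulrC.
  by field; rewrite addrC addr_eq0 hl gt_eqF.
- have := G2 hl; have := scaled_le (C1 * t); move=> h1 h2.
  by rewrite -(ler_pM2l El_gt0); lra.
- by have := G3 hl; have := le_scaled (- lam * t); lra.
- by have := G4 hl; have := le_scaled (- C1 * t); lra.
Qed.

End Estimates.

Section Transport.
Context {R : realType} {n : nat}.
Context {t lam C1 b : R} {eta deta : R -> 'rV[R]_n}.
Hypotheses (t_gt0 : 0 < t) (C1_ge0 : 0 <= C1) (deta_eta : deriv_on 0 t eta deta)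
  (deta_le : forall s, 0 < s < t ->
     enorm (deta s + lam *: eta s) <= C1 * (b + enorm (eta s))).

Lemma transport_comparison (c : 'rV[R]_n) (sigma : R) (P : R -> R) :
  `|sigma| = 1 -> {within `[0, t], continuous P} ->
  (forall s, 0 < s < t -> is_derive s 1 P (expR ((sigma * C1 + lam) * s))) ->
  sigma * (enorm (eta 0 - c) + enorm c + sigma * C1 * b * P 0)
  <= sigma * (expR (sigma * C1 * t) * (enorm (expR (lam * t) *: eta t - c) + enorm c)
              + sigma * C1 * b * P t).
Proof.
move=> sig1 cP dP; set E := expR (sigma * C1 * t); have E_gt0 : 0 < E := expR_gt0 _.
(* Smoothing with [dl] costs at most [(1 + E) sqrt dl] in the comparison. *)
apply/ler_addgt0Pr => eps eps_gt0.
have r_gt0 : 0 < eps / (1 + E) by rewrite divr_gt0 // ltr_wpDr // ltW.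
set dl := (eps / (1 + E)) ^+ 2; have dl_gt0 : 0 < dl := exprn_gt0 _ r_gt0.
have eps_dl : eps = (1 + E) * Num.sqrt dl.
  by rewrite sqrtr_sqr gtr0_norm // mulrC divfK // gt_eqF // ltr_wpDr // ltW.
have := @exp_weighted_comparison R _ _ P t C1 b (enorm c) lam sigma t_gt0 sig1
  (continuous_smoothed_dist (dl := dl) (c := c) deta_eta) cP
  (is_derive_smoothed_dist (c := c) deta_eta dl_gt0) dP
  (fun s st => norm_deriv_smoothed_dist_le (c := c) dl_gt0 _ _ _ C1_ge0 (deta_le s st)).
have /andP[Phi0_lo Phi0_hi] := smoothed_dist_bounds (lam := lam) (eta := eta) (c := c) dl_gt0 0.
have /andP[Phit_lo Phit_hi] := smoothed_dist_bounds (lam := lam) (eta := eta) (c := c) dl_gt0 t.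
rewrite mulr0 expR0 scale1r in Phi0_lo Phi0_hi.
have := ler_wpM2l (ltW E_gt0) Phit_lo; have := ler_wpM2l (ltW E_gt0) Phit_hi.
have := sqrtr_ge0 dl; rewrite -/E.
by move/eqP: sig1; rewrite eqr_norml ler01 andbT => /orP[]/eqP->; lra.
Qed.

Lemma transport_backward :
  enorm (expR (lam * t) *: eta t - eta 0) + expR (lam * t) * enorm (eta t)
    + C1 * b * exp_primitive (C1 + lam) 0
  <= expR (C1 * t) * (expR (lam * t) * enorm (eta t)) + C1 * b * exp_primitive (C1 + lam) t.
Proof.
have := @transport_comparison (expR (lam * t) *: eta t) 1 _ (normr1 _)
  (continuous_subspaceT (continuous_exp_primitive _)) (fun s _ => is_derive_exp_primitive _ s).
by rewrite !mul1r subrr enorm0 add0r enorm_distC enormZ gtr0_norm ?expR_gt0.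
Qed.

Lemma transport_forward :
  expR (- C1 * t) * (enorm (expR (lam * t) *: eta t - eta 0) + enorm (eta 0))
    - C1 * b * exp_primitive (lam - C1) t
  <= enorm (eta 0) - C1 * b * exp_primitive (lam - C1) 0.
Proof.
have := @transport_comparison (eta 0) (-1) _ (normrN1 _)
  (continuous_subspaceT (continuous_exp_primitive _)) (fun s _ => is_derive_exp_primitive _ s).
by rewrite !mulN1r subrr enorm0 add0r [- C1 + lam]addrC; lra.
Qed.

Lemma characteristic_estimates : transport_estimates C1 b lam t (eta t) (eta 0).
Proof.
have bwd := transport_backward; have fwd := transport_forward.
set L := expR (lam * t) in bwd fwd; set El := expR (C1 * t) in bwd.
set N := enorm (L *: eta t - eta 0) in bwd fwd.
have L_gt0 : 0 < L := expR_gt0 _; have El_gt0 : 0 < El := expR_gt0 _.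
have eNl : expR (- lam * t) = L^-1 by rewrite mulNr expRN.
have eNC : expR (- C1 * t) = El^-1 by rewrite mulNr expRN.
split => [hl|hl|hl|hl].
- have a0 : C1 + lam != 0 by rewrite addrC addr_eq0.
  move: bwd; rewrite /exp_primitive (negbTE a0) mulr0 expR0 mulrDl expRD -/L -/El => bwd.
  rewrite eNl enorm_subZV // -/N -(ler_pM2l L_gt0) mulrA mulfV ?gt_eqF // mul1r.
  rewrite [X in _ <= X](_ : _ = C1 * b * (El * L / (C1 + lam)) - C1 * b * (1 / (C1 + lam))
      + El * (L * enorm (eta t)) - L * enorm (eta t)); first lra.
  by field; rewrite a0 gt_eqF.
- have ElE : El = L^-1 by rewrite /L hl eNC invrK.
  move: bwd; rewrite hl addrN /exp_primitive eqxx ElE mulrA mulVf ?gt_eqF // mul1r => bwd.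
  rewrite -/El ElE enorm_subZV // -/N -(ler_pM2l L_gt0) mulrA mulfV ?gt_eqF // mul1r.
  rewrite [X in _ <= X](_ : _ = C1 * b * t + enorm (eta t) - L * enorm (eta t)); first lra.
  by field; rewrite gt_eqF.
- have a0 : lam - C1 != 0 by rewrite subr_eq0.
  have eCl : expR ((lam - C1) * t) = L * El^-1 by rewrite mulrBl expRD expRN.
  move: fwd; rewrite /exp_primitive (negbTE a0) mulr0 expR0 eNC eCl => fwd.
  have LEl_gt0 : 0 < L * El^-1 by rewrite mulr_gt0 ?invr_gt0.
  rewrite eNl enorm_subZV // -/N -(ler_pM2l LEl_gt0).
  rewrite [X in X <= _](_ : _ = El^-1 * N); last by field; rewrite !gt_eqF.
  rewrite [X in _ <= X](_ : _ = C1 * b * (L * El^-1 / (lam - C1)) - C1 * b * (1 / (lam - C1))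
      + enorm (eta 0) - El^-1 * enorm (eta 0)); first lra.
  have eClN : expR ((C1 - lam) * t) = El * L^-1 by rewrite mulrBl expRD expRN.
  have a1 : C1 - lam != 0 by rewrite subr_eq0 eq_sym.
  by rewrite eClN; field; rewrite a0 a1 !gt_eqF.
- have LE : L = El by rewrite /L /El hl.
  move: fwd; rewrite eNC hl subrr /exp_primitive eqxx => fwd.
  have NE : enorm (El *: eta t - eta 0) = N by rewrite -LE.
  by rewrite enorm_subZV // NE; lra.
Qed.

End Transport.

Theorem proposition6p1 (R : realType) (n : nat) (T lam C1 beta A2 B2 : R)
  (H0 : 'rV[R]_n -> R -> 'rV[R]_n -> R) (u0 : 'rV[R]_n -> R)
  (u : 'rV[R]_n -> R -> R) (x : 'rV[R]_n) (t : R) (xi eta : R -> 'rV[R]_n) :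
  0 < T ->
  (exists L : R, forall y z, `|u0 y - u0 z| <= L * enorm (y - z)) ->
  0 <= C1 -> (beta = 0 \/ beta = 1) ->
  (forall (y z : 'rV[R]_n) (s : R) (p : 'rV[R]_n), 0 <= s <= T ->
     `|H0 y s p - H0 z s p| <= C1 * (beta + enorm p) * enorm (y - z)) ->
  0 <= A2 -> 0 <= B2 ->
  (forall (y : 'rV[R]_n) (s : R) (p q : 'rV[R]_n), 0 <= s <= T ->
     `|H0 y s p - H0 y s q| <= (A2 * enorm y + B2) * enorm (p - q)) ->
  (forall (y : 'rV[R]_n) (s : R) (p q : 'rV[R]_n) (a : R), 0 <= s <= T ->
     0 <= a <= 1 ->
     H0 y s (a *: p + (1 - a) *: q) <= a * H0 y s p + (1 - a) * H0 y s q) ->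
  (exists eps : R, 0 < eps /\
     C2_on (Hunc H0) [set z | - eps < z.1.2 < T + eps]) ->
  (forall (y : 'rV[R]_n) (s : R) (p : 'rV[R]_n), 0 <= s <= T ->
     posdef (DppH H0 y s p)) ->
  visc_solution T lam H0 u0 u ->
  0 < t < T ->
  differentiable (uncurry_xt u) (x, t) ->
  deriv_on 0 t xi (fun s => DpH H0 (xi s) s (eta s)) ->
  deriv_on 0 t eta (fun s => - DxH H0 (xi s) s (eta s) - lam *: eta s) ->
  xi t = x -> eta t = gradx (uncurry_xt u) (x, t) ->
  let Du := gradx (uncurry_xt u) (x, t) in
  [/\ (lam != - C1 ->
        enorm (Du - expR (- lam * t) *: eta 0)
        <= C1 * beta / (C1 + lam) * (expR (C1 * t) - expR (- lam * t))
           + enorm Du * (expR (C1 * t) - 1)),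
      (lam = - C1 ->
        enorm (Du - expR (C1 * t) *: eta 0)
        <= C1 * beta * t * expR (C1 * t) + enorm Du * (expR (C1 * t) - 1)),
      (lam != C1 ->
        enorm (Du - expR (- lam * t) *: eta 0)
        <= C1 * beta / (C1 - lam) * (expR ((C1 - lam) * t) - 1)
           + enorm (eta 0) * (expR ((C1 - lam) * t) - expR (- lam * t))) &
      (lam = C1 ->
        enorm (Du - expR (- C1 * t) *: eta 0)
        <= C1 * beta * t + enorm (eta 0) * (1 - expR (- C1 * t)))] /\
  [/\ (lam != - C1 ->
        enorm (eta 0) * expR (- (C1 + lam) * t)
          - C1 * beta / (C1 + lam) * (1 - expR (- (C1 + lam) * t)) <= enorm Du),
      (lam = - C1 -> enorm (eta 0) - C1 * beta * t <= enorm Du),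
      (lam != C1 ->
        enorm Du <= enorm (eta 0) * expR ((C1 - lam) * t)
          + C1 * beta / (C1 - lam) * (expR ((C1 - lam) * t) - 1)) &
      (lam = C1 -> enorm Du <= enorm (eta 0) + C1 * beta * t)].
Proof.
move=> _ _ C1_ge0 beta01 H_lip _ _ _ _ [eps [eps_gt0 [[H_diff _] _]]] _ _.
move=> /andP[t_gt0 t_lt_T] _ _ deta_eta _ eta_t Du.
have beta_ge0 : 0 <= beta by case: beta01 => ->.
have deta_le s : 0 < s < t ->
    enorm ((- DxH H0 (xi s) s (eta s) - lam *: eta s) + lam *: eta s)
    <= C1 * (beta + enorm (eta s)).
  move=> /andP[s_gt0 s_lt_t]; rewrite subrK enormN.
  have sT : 0 <= s <= T by rewrite ltW //= ltW // (lt_trans s_lt_t).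
  apply: enorm_DxH_le; first by rewrite mulr_ge0 ?addr_ge0 ?enorm_ge0.
    by apply: H_diff; apply/andP; split => /=; lra.
  by move=> y; exact: H_lip.
have est := characteristic_estimates t_gt0 C1_ge0 deta_eta deta_le.
by rewrite /Du -eta_t; split; [exact: est | exact: norm_estimates_of_transport].
Qed.
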